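(* Let $\mathcal G=(\mathcal V,\mathcal E)$ be a digraph (network) and $u\in\mathcal V$ an agent executing Phase 1 of the protocol described in the context (not counting steps that call other phases). Then the time-complexity of Phase 1 for agent $u$ is $\mathcal O(\max\{|\mathcal N^-(u)||\mathcal E|,\ |\mathcal V|+|\mathcal E|\})$, where $\mathcal N^-(u)=\{v:(v,u)\in\mathcal E\}$.
   Context: Agents are the nodes of a digraph $(\mathcal V,\mathcal E)$, with unique integer IDs, each knowing its in- and out-neighbors, communicating synchronously along edges ($v$ receives from $u$ if $(u,v)\in\mathcal E$). Phase 1 for agent $u$: $u$ initially knows the set of its outgoing edges $\{(u,v):(u,v)\in\mathcal E\}$; repeatedly, it sends the edges newly learned in the previous step to all its out-neighbors and adds to its known set all edges received from its in-neighbors, until no new edges are learned. Then $u$ computes, with Tarjan's algorithm, the strongly connected components (SCCs) of the digraph formed by its known edges, and classifies its own SCC $\mathcal S$ as a source (no known edge from outside $\mathcal S$ into $\mathcal S$), a target (no known edge from $\mathcal S$ to outside), mixed (both kinds exist) or isolated (neither exists), and then decides which phase to go to next. *)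

From mathcomp Require Import all_boot.
Set Implicit Arguments. Unset Strict Implicit. Unset Printing Implicit Defensive.

Section Network.
Variables (T : finType) (E : rel T).

Definition edges : {set T * T} := [set e | E e.1 e.2].
Definition in_nbrs (u : T) : {set T} := [set v | E v u].

(* Synchronous execution of the edge-flooding step of Phase 1, for all agents.
   know t = (K_t, N_t) where K_t v is the set of edges known to v after t steps
   and N_t v the set of edges newly learned by v at step t
   (N_0 v = K_0 v = the outgoing edges of v). At step t+1, agent v receives
   N_t w from every in-neighbour w, and sends N_t v to its out-neighbours. *)
Fixpoint know (t : nat) : (T -> {set T * T}) * (T -> {set T * T}) :=
  match t with
  | 0 => let K0 := fun v => [set e in edges | e.1 == v] in (K0, K0)
  | t'.+1 =>
      let: (K, N) := know t' in
      let K' := fun v => K v :|: \bigcup_(w | E w v) N w in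
      (K', fun v => K' v :\: K v)
  end.

Definition known (t : nat) (v : T) : {set T * T} := (know t).1 v.
Definition newly (t : nat) (v : T) : {set T * T} := (know t).2 v.

(* Agent u stops after the first step t+1 in which it learns no new edge, i.e.
   the least t with known (t+1) u = known t u (it exists below #|T|^2 + 1, since
   the known sets increase inside a set with at most #|T|^2 elements). *)
Definition stop_time (u : T) : nat :=
  find (fun t => known t.+1 u == known t u) (iota 0 (#|T| ^ 2).+1).

Definition final_known (u : T) : {set T * T} := known (stop_time u) u.

(* Cost of the flooding part: each of the steps 1 .. stop_time u + 1 costs one unit
   of overhead, one unit per edge u sends (as one broadcast message), and one unit
   per edge received from each in-neighbour (including duplicates). *)
Definition flood_cost (u : T) : nat :=
  \sum_(t < (stop_time u).+1)
     (1 + #|newly t u| + \sum_(w | E w u) #|newly t w|).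

End Network.

Section Tarjan.
Variables (T : finType) (K : {set T * T}).

Record tstate := TState {
  t_idx : T -> option nat;
  t_low : T -> nat;
  t_stk : seq T;             (* Tarjan stack (head = top) *)
  t_cnt : nat;
  t_comps : seq (seq T);
  t_ops : nat
}.

Definition upd {A : Type} (f : T -> A) (x : T) (a : A) : T -> A :=
  fun y => if y == x then a else f y.

Definition tick (s : tstate) : tstate :=
  TState (t_idx s) (t_low s) (t_stk s) (t_cnt s) (t_comps s) (t_ops s).+1.

Definition set_low (v : T) (n : nat) (s : tstate) : tstate :=
  TState (t_idx s) (upd (t_low s) v n) (t_stk s) (t_cnt s) (t_comps s) (t_ops s).

Definition adj (v : T) : seq T := [seq w <- enum T | (v, w) \in K].

Definition kvertices (u : T) : seq T :=
  [seq x <- enum T | (x == u) || [exists y, ((x, y) \in K) || ((y, x) \in K)]].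

Definition pop_comp (v : T) (s : tstate) : tstate :=
  let c := take (index v (t_stk s)).+1 (t_stk s) in
  TState (t_idx s) (t_low s) (drop (index v (t_stk s)).+1 (t_stk s))
         (t_cnt s) (c :: t_comps s) (t_ops s + size c).

Fixpoint strongconnect (fuel : nat) (v : T) (s : tstate) : tstate :=
  match fuel with
  | 0 => s
  | f.+1 =>
    let s1 := TState (upd (t_idx s) v (Some (t_cnt s))) (upd (t_low s) v (t_cnt s))
                     (v :: t_stk s) (t_cnt s).+1 (t_comps s) (t_ops s).+1 in
    let s2 := foldl (fun st w =>
                 let st := tick st in
                 match t_idx st w with
                 | None => let st' := strongconnect f w st in
                           set_low v (minn (t_low st' v) (t_low st' w)) st'
                 | Some iw => if w \in t_stk st
                              then set_low v (minn (t_low st v) iw) st else st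
                 end) s1 (adj v) in
    if t_idx s2 v == Some (t_low s2 v) then pop_comp v s2 else s2
  end.

Definition tarjan_init : tstate :=
  TState (fun _ => None) (fun _ => 0) [::] 0 [::] 0.

Definition tarjan (vs : seq T) : tstate :=
  foldl (fun st v => let st := tick st in
           if t_idx st v is None then strongconnect #|T|.+1 v st else st)
        tarjan_init vs.

End Tarjan.

(* Total cost of Phase 1 for agent u: flooding, Tarjan on the known graph, and the
   classification of u's SCC (one scan over the known edges, plus O(1)). *)
Definition phase1_cost (T : finType) (E : rel T) (u : T) : nat :=
  let K := final_known E u in
  flood_cost E u + t_ops (tarjan K (kvertices K u)) + (#|K| + 1).

(* Flooding: the edges known to an agent form an increasing family of subsets of
   the edge set, strictly increasing until the agent stops, so it stops within
   |E| steps.  The edges newly learned by an agent over all steps are disjoint,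
   hence at most |E| of them; this bounds both what u sends and what it receives
   from each of its in-neighbours, giving (|N^-(u)| + 1) |E| + O(|E|).
   Tarjan: count operations plus stack size, so that popping is free; against
   the potential "sum over visited vertices of (out-degree + 2)" every other
   operation is paid either by visiting a vertex, which happens at most once per
   vertex, or by an outer iteration, so the search costs O(|V| + |K|) with K the
   known edges. *)

From mathcomp Require Import all_boot zify.
Set Implicit Arguments. Unset Strict Implicit. Unset Printing Implicit Defensive.

Section Flooding.
Variables (T : finType) (E : rel T).

Lemma knownS t v :
  known E t.+1 v = known E t v :|: \bigcup_(w | E w v) newly E t w.
Proof. by rewrite /known /newly /=; case: (know E t). Qed.

Lemma newlyS t v : newly E t.+1 v = known E t.+1 v :\: known E t v.
Proof. by rewrite /known /newly /=; case: (know E t). Qed.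

Lemma newly0 v : newly E 0 v = known E 0 v.
Proof. by []. Qed.

Lemma known_subS t v : known E t v \subset known E t.+1 v.
Proof. by rewrite knownS subsetUl. Qed.

Lemma newly_sub_known t v : newly E t v \subset known E t v.
Proof. by case: t => [|t]; rewrite ?newly0 ?newlyS ?subsetDl. Qed.

Lemma known_sub_edges t v : known E t v \subset edges E.
Proof.
elim: t v => [|t IH] v.
  by apply/subsetP => e; rewrite inE => /andP[].
rewrite knownS subUset IH; apply/bigcupsP => w _.
exact: subset_trans (newly_sub_known t w) (IH w).
Qed.

Lemma card_known_le t v : #|known E t v| <= #|edges E|.
Proof. exact/subset_leq_card/known_sub_edges. Qed.

Lemma sum_card_newly n v : \sum_(t < n.+1) #|newly E t v| = #|known E n v|.
Proof.
elim: n => [|n IH]; first by rewrite big_ord_recr big_ord0.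
rewrite big_ord_recr /= IH newlyS.
have := cardsID (known E n v) (known E n.+1 v).
by rewrite (setIidPr (known_subS n v)).
Qed.

Lemma known_proper_before_stop u t :
  t < stop_time E u -> known E t u \proper known E t.+1 u.
Proof.
move=> lt_t_stop; rewrite properEneq known_subS andbT eq_sym.
have lt_t_size : t < (#|T| ^ 2).+1.
  rewrite -(size_iota 0 (#|T| ^ 2).+1).
  exact: leq_trans lt_t_stop (find_size _ _).
by have := before_find 0 lt_t_stop; rewrite nth_iota // add0n => ->.
Qed.

Lemma stop_time_le u : stop_time E u <= #|edges E|.
Proof.
suff grow t : t <= stop_time E u -> t <= #|known E t u|.
  exact: leq_trans (grow _ (leqnn _)) (card_known_le _ _).
elim: t => [|t IH] // lt_t_stop.
have := proper_card (known_proper_before_stop lt_t_stop).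
by have := IH (ltnW lt_t_stop); lia.
Qed.

Lemma flood_cost_le u :
  flood_cost E u <= #|edges E|.+1 + #|edges E| + #|in_nbrs E u| * #|edges E|.
Proof.
rewrite /flood_cost !big_split /= sum_nat_const card_ord muln1.
rewrite sum_card_newly exchange_big /=.
have -> : #|in_nbrs E u| * #|edges E| = \sum_(w | E w u) #|edges E|.
  by rewrite -sum_nat_const; apply: eq_bigl => w; rewrite inE.
apply: leq_add; first exact: leq_add (stop_time_le u) (card_known_le _ _).
by apply: leq_sum => w _; rewrite sum_card_newly card_known_le.
Qed.

End Flooding.

Lemma foldl_amortized (S A : Type) (charge pot : S -> nat) (F : S -> A -> S) :
  (forall s a, charge (F s a) + pot s <= charge s + pot (F s a) + 1) ->
  forall l s,
    charge (foldl F s l) + pot s <= charge s + pot (foldl F s l) + size l.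
Proof.
move=> step; elim=> [|a l IH] s /=; first by rewrite addn0.
by have := step s a; have := IH (F s a); lia.
Qed.

Section TarjanCost.
Variables (T : finType) (K : {set T * T}).

Definition visited (s : tstate T) : {set T} := [set x | t_idx s x != None].

Definition visit_weight (x : T) : nat := (size (adj K x)).+2.

Definition potential (s : tstate T) : nat := \sum_(x in visited s) visit_weight x.

Definition charge (s : tstate T) : nat := t_ops s + size (t_stk s).

Lemma charge_tick s : charge (tick s) = (charge s).+1.
Proof. by rewrite /charge /= addSn. Qed.

Lemma potential_tick s : potential (tick s) = potential s.
Proof. by []. Qed.

Lemma charge_set_low v n s : charge (set_low v n s) = charge s.
Proof. by []. Qed.

Lemma potential_set_low v n s : potential (set_low v n s) = potential s.
Proof. by []. Qed.

Lemma charge_pop_comp v s : charge (pop_comp v s) = charge s.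
Proof. by rewrite /charge /= -addnA -size_cat cat_take_drop. Qed.

Lemma potential_pop_comp v s : potential (pop_comp v s) = potential s.
Proof. by []. Qed.

(* Entering v pays 2 (index step and push) and each scanned neighbour pays 1,
   all covered by visit_weight v; popping only moves stack entries into t_ops. *)
Lemma strongconnect_amortized fuel v s : t_idx s v = None ->
  charge (strongconnect K fuel v s) + potential s <=
  charge s + potential (strongconnect K fuel v s).
Proof.
elim: fuel v s => [|fuel IH] v s v_new //; cbn [strongconnect].
set s1 := TState _ _ _ _ _ _; set F := (fun st w => _).
have charge_s1 : charge s1 = (charge s).+2 by rewrite /charge /= addnS addSn.
have visited_s1 : visited s1 = v |: visited s.
  by apply/setP => x; rewrite !inE /s1 /upd /=; case: (x == v).
have potential_s1 : potential s1 = visit_weight v + potential s.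
  by rewrite /potential visited_s1 big_setU1 // inE v_new.
have scan_step st w :
    charge (F st w) + potential st <= charge st + potential (F st w) + 1.
  rewrite /F; case idx_w: (t_idx (tick st) w) => [iw|].
    by case: ifP => _;
      rewrite ?charge_set_low ?potential_set_low charge_tick potential_tick; lia.
  have := IH w _ idx_w.
  by rewrite charge_set_low potential_set_low charge_tick potential_tick; lia.
have := foldl_amortized scan_step (adj K v) s1.
rewrite charge_s1 potential_s1 /visit_weight.
by case: ifP => _; rewrite ?charge_pop_comp ?potential_pop_comp; lia.
Qed.

Lemma tarjan_ops_le vs : t_ops (tarjan K vs) <= \sum_x visit_weight x + size vs.
Proof.
have init_free : charge (tarjan_init T) + potential (tarjan_init T) = 0.
  by rewrite /potential big1 // => x; rewrite inE.
have outer_step st v :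
  let st' := tick st in
  let st'' :=
    if t_idx st' v is None then strongconnect K #|T|.+1 v st' else st' in
  charge st'' + potential st <= charge st + potential st'' + 1.
  move=> st' st''; rewrite {}/st'' {}/st'.
  case idx_v: (t_idx (tick st) v) => [iv|].
    by rewrite charge_tick potential_tick; lia.
  have := strongconnect_amortized #|T|.+1 idx_v.
  by rewrite charge_tick potential_tick; lia.
have := foldl_amortized outer_step vs (tarjan_init T).
rewrite -/(tarjan K vs).
have : potential (tarjan K vs) <= \sum_x visit_weight x.
  by rewrite [leqRHS](bigID (mem (visited (tarjan K vs)))) leq_addr.
by move: init_free; rewrite /charge; lia.
Qed.

Lemma sum_visit_weight : \sum_x visit_weight x = #|T|.*2 + #|K|.
Proof.
rewrite (eq_bigr (fun x => size (adj K x) + 2)) => [|x _]; last by rewrite addn2.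
rewrite big_split /= sum_nat_const cardT -/#|T| muln2 addnC; congr (_ + _).
rewrite (eq_bigr (fun x => \sum_(y | (x, y) \in K) 1)) => [|x _].
  by rewrite pair_big_dep -sum1_card; apply: eq_bigl => -[].
rewrite size_filter -sum1_count big_enum_cond.
by apply: eq_bigl => y; rewrite inE.
Qed.

End TarjanCost.

Theorem proposition3 :
  exists C : nat, forall (T : finType) (E : rel T) (u : T),
    phase1_cost E u <= C * maxn (#|in_nbrs E u| * #|edges E|) (#|T| + #|edges E|).
Proof.
exists 6 => T E u; rewrite /phase1_cost.
set K := final_known E u.
have card_K : #|K| <= #|edges E| by apply: card_known_le.
have tarjan_cost := tarjan_ops_le K (kvertices K u).
rewrite sum_visit_weight in tarjan_cost.
have size_kvertices : size (kvertices K u) <= #|T|.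
  by rewrite size_filter cardT count_size.
have flooding := flood_cost_le E u.
have T_gt0 : 0 < #|T| by apply/card_gt0P; exists u.
have := leq_maxl (#|in_nbrs E u| * #|edges E|) (#|T| + #|edges E|).
have := leq_maxr (#|in_nbrs E u| * #|edges E|) (#|T| + #|edges E|).
lia.
Qed.
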